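(* The map $\mathcal J:\mathcal X_\Lambda\to\mathcal X_J$, $\mathcal J(f)(\theta)=f(\theta)/\theta$ for $\theta\ne0$ and $\mathcal J(f)(0)=\liminf_{\theta\to0}f(\theta)$, is continuous when both spaces carry $\tau_{AW}$.
   Context: For a probability measure $\nu$ let $f_\nu(\theta)=\int e^{\theta x}\nu(dx)\in(0,\infty]$. For $f:\mathbb R\to[-\infty,\infty]$, $\mathrm{epi}(f)=\{(\theta,b):b\ge f(\theta)\}$. On $\mathbb R^2$ use the box metric $d(x,y)=\max(|x_1-y_1|,|x_2-y_2|)$, $d(x,A)=\inf_{y\in A}d(x,y)$, $\overline B_k=\{x:d(0,x)\le k\}$. The Attouch–Wets topology $\tau_{AW}$ has local base at $f$ given by $V_k(f)=\{g:\sup_{x\in\overline B_k}|d(x,\mathrm{epi}(g))-d(x,\mathrm{epi}(f))|<1/k\}$. $\mathcal X_M$ = lower semicontinuous convex $f:\mathbb R\to(0,\infty]$ with $f(0)<\infty$ for which some probability $\nu$ satisfies $f(\theta)=f_\nu(\theta)$ whenever $f(\theta)<\infty$; $\mathcal X_\Lambda=\{\log g:g\in\mathcal X_M\}$ (with $\log\infty=\infty$); $\mathcal X_J$ = functions $f:\mathbb R\to[-\infty,\infty]$ with $f(\theta)=g(\theta)/\theta$ for $\theta\ne0$ and $f(0)=\liminf_{\theta\to0}f(\theta)$ for some $g\in\mathcal X_\Lambda$; for $f\in\mathcal X_J$, $\mathrm{epi}(f)$ denotes the closure in $\mathbb R^2$ of its epigraph (equivalently the epigraph of its lower semicontinuous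 regularisation), which is used to define $\tau_{AW}$ on $\mathcal X_J$. *)

From Stdlib Require Import Reals Lra List Classical ClassicalEpsilon.
Open Scope R_scope.

Inductive Rbar : Type := Fin (r : R) | PInf | MInf.

Definition Rbar_le (x y : Rbar) : Prop :=
  match x, y with
  | MInf, _ => True
  | _, PInf => True
  | Fin a, Fin b => a <= b
  | _, _ => False
  end.

Definition Rbar_lt (x y : Rbar) : Prop := Rbar_le x y /\ x <> y.

Definition Rbar_is_lub (E : Rbar -> Prop) (l : Rbar) : Prop :=
  (forall x, E x -> Rbar_le x l) /\
  (forall u, (forall x, E x -> Rbar_le x u) -> Rbar_le l u).

Definition Rbar_is_glb (E : Rbar -> Prop) (l : Rbar) : Prop :=
  (forall x, E x -> Rbar_le l x) /\
  (forall u, (forall x, E x -> Rbar_le u x) -> Rbar_le u l).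

(** supremum / infimum in [-oo,+oo] (they always exist; chosen by epsilon) *)
Definition Rbar_sup (E : Rbar -> Prop) : Rbar :=
  epsilon (inhabits MInf) (Rbar_is_lub E).
Definition Rbar_inf (E : Rbar -> Prop) : Rbar :=
  epsilon (inhabits PInf) (Rbar_is_glb E).

Definition Rbar_log (x : Rbar) : Rbar :=
  match x with Fin r => Fin (ln r) | PInf => PInf | MInf => MInf end.

Definition Rbar_div (x : Rbar) (t : R) : Rbar :=
  match x with
  | Fin r => Fin (r / t)
  | PInf => if Rlt_dec 0 t then PInf else MInf
  | MInf => if Rlt_dec 0 t then MInf else PInf
  end.

Inductive borel : (R -> Prop) -> Prop :=
| borel_open : forall U, open_set U -> borel U
| borel_compl : forall A, borel A -> borel (fun x => ~ A x)
| borel_union : forall A : nat -> R -> Prop,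
    (forall n, borel (A n)) -> borel (fun x => exists n, A n x).

Definition is_prob_measure (mu : (R -> Prop) -> R) : Prop :=
  (forall A, borel A -> 0 <= mu A) /\
  mu (fun _ => True) = 1 /\
  (forall A : nat -> R -> Prop,
     (forall n, borel (A n)) ->
     (forall n m x, n <> m -> A n x -> A m x -> False) ->
     infinite_sum (fun n => mu (A n)) (mu (fun x => exists n, A n x))).

(** nonnegative simple function sum_i c_i 1_{A_i} (A_i disjoint Borel) below g *)
Definition simple_below (mu : (R -> Prop) -> R) (g : R -> R)
  (l : list (R * (R -> Prop))) : Prop :=
  (forall i, (i < length l)%nat ->
     0 <= fst (nth i l (0, fun _ => False)) /\
     borel (snd (nth i l (0, fun _ => False))) /\
     (forall x, snd (nth i l (0, fun _ => False)) x ->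
        fst (nth i l (0, fun _ => False)) <= g x)) /\
  (forall i j x, (i < length l)%nat -> (j < length l)%nat -> i <> j ->
     snd (nth i l (0, fun _ => False)) x ->
     snd (nth j l (0, fun _ => False)) x -> False).

Definition simple_integral (mu : (R -> Prop) -> R) (l : list (R * (R -> Prop))) : R :=
  fold_right (fun p acc => fst p * mu (snd p) + acc) 0 l.

Definition integral_nonneg (mu : (R -> Prop) -> R) (g : R -> R) : Rbar :=
  Rbar_sup (fun v => exists l, simple_below mu g l /\ v = Fin (simple_integral mu l)).

Definition mgf (nu : (R -> Prop) -> R) (theta : R) : Rbar :=
  integral_nonneg nu (fun x => exp (theta * x)).

Definition X_M (f : R -> Rbar) : Prop :=
  (forall t, (exists r, f t = Fin r /\ 0 < r) \/ f t = PInf) /\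
  f 0 <> PInf /\
  (forall t c, Rbar_lt (Fin c) (f t) ->
     exists d, 0 < d /\ forall t', Rabs (t' - t) < d -> Rbar_lt (Fin c) (f t')) /\
  (forall x y s a b, 0 <= s <= 1 -> f x = Fin a -> f y = Fin b ->
     Rbar_le (f (s * x + (1 - s) * y)) (Fin (s * a + (1 - s) * b))) /\
  (exists nu, is_prob_measure nu /\ forall t, f t <> PInf -> f t = mgf nu t).

Definition X_Lambda (f : R -> Rbar) : Prop :=
  exists g, X_M g /\ forall t, f t = Rbar_log (g t).

Definition liminf0 (h : R -> Rbar) : Rbar :=
  Rbar_sup (fun s => exists d, 0 < d /\
     s = Rbar_inf (fun v => exists t, t <> 0 /\ Rabs t < d /\ v = h t)).

Definition Jmap (f : R -> Rbar) (t : R) : Rbar :=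
  if Req_EM_T t 0 then liminf0 (fun u => Rbar_div (f u) u)
  else Rbar_div (f t) t.

Definition X_J (h : R -> Rbar) : Prop :=
  exists g, X_Lambda g /\ forall t, h t = Jmap g t.

Definition boxd (x y : R * R) : R :=
  Rmax (Rabs (fst x - fst y)) (Rabs (snd x - snd y)).

Definition epi (f : R -> Rbar) (p : R * R) : Prop := Rbar_le (f (fst p)) (Fin (snd p)).

Definition closure2 (A : R * R -> Prop) (p : R * R) : Prop :=
  forall e, 0 < e -> exists q, A q /\ boxd p q < e.

Definition dist_set (x : R * R) (A : R * R -> Prop) : Rbar :=
  Rbar_inf (fun v => exists y, A y /\ v = Fin (boxd x y)).

(** [inV k A B]: the function with (closed) epigraph B lies in V_k of the
    function with epigraph A, i.e.
    sup_{x in closed box of radius k} |d(x,B) - d(x,A)| < 1/k. *)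
Definition inV (k : nat) (A B : R * R -> Prop) : Prop :=
  exists c, c < / INR k /\
    forall x, boxd (0, 0) x <= INR k ->
      exists d1 d2, dist_set x B = Fin d1 /\ dist_set x A = Fin d2 /\
                    Rabs (d1 - d2) <= c.

(** An element [L = log g] of [X_Lambda] is finite or [+oo], vanishes at [0], and is
    convex because a moment generating function is log-convex (Hoelder's inequality, proved here
    from the definition of the integral through simple functions). Hence the slopes [L t / t] are
    nondecreasing on [t < 0] and across [0]. Attouch-Wets closeness of [epi f] and [epi g] means
    that every point of one of them in a large box is close to a point of the other. At distance
    [d] right of the origin, [(t, s) |-> (t, s / t)] maps epigraphs of [L] onto epigraphs of
    [Jmap L] with Lipschitz constant [O(1 / d)]; near or left of the origin, a point of
    [epi (Jmap f)] moved a fixed amount left and slightly up lands in [epi (Jmap g)], since the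
    monotone slopes absorb a small perturbation of the epigraph. So every point of either closed
    epigraph of [Jmap] in a box is [2 e]-close to the other one, which bounds the difference of the
    two distance functions. *)

From Stdlib Require Import Reals Lra Lia List Classical ClassicalEpsilon FunctionalExtensionality PropExtensionality.
Open Scope R_scope.

(** * Order on the extended reals *)

Lemma Rbar_le_trans x y z : Rbar_le x y -> Rbar_le y z -> Rbar_le x z.
Proof. destruct x, y, z; simpl; auto; try lra; tauto. Qed.

Lemma Rbar_le_antisym x y : Rbar_le x y -> Rbar_le y x -> x = y.
Proof. destruct x, y; simpl; try tauto. intros; f_equal; lra. Qed.

Lemma Rbar_glb_exists (E : Rbar -> Prop) : exists l, Rbar_is_glb E l.
Proof.
  destruct (classic (E MInf)) as [HM|HM].
  { exists MInf; split; [intros; simpl; auto|]. intros u Hu. apply Hu; auto. }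
  destruct (classic (exists r, E (Fin r))) as [[r0 Hr0]|HF].
  2:{ exists PInf; split.
      - intros x Hx; destruct x; simpl; auto. exfalso; eauto.
      - intros u _; destruct u; simpl; auto. }
  set (N := fun r => E (Fin (- r))).
  destruct (classic (bound N)) as [Hb|Hb].
  - assert (Hne : exists x, N x) by (exists (- r0); unfold N; rewrite Ropp_involutive; auto).
    destruct (completeness N Hb Hne) as [m [Hm1 Hm2]].
    exists (Fin (- m)); split.
    + intros x Hx; destruct x; simpl; auto; try contradiction.
      assert (- r <= m) by (apply Hm1; unfold N; rewrite Ropp_involutive; auto). lra.
    + intros u Hu; destruct u; simpl; auto.
      * assert (m <= - r); [|lra]. apply Hm2. intros x Hx.
        specialize (Hu _ Hx). simpl in Hu. lra.
      * specialize (Hu _ Hr0); simpl in Hu; auto.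
  - exists MInf; split; [intros; simpl; auto|].
    intros u Hu; destruct u; simpl; auto.
    + apply Hb. exists (- r). intros x Hx. specialize (Hu _ Hx). simpl in Hu. lra.
    + specialize (Hu _ Hr0); simpl in Hu; auto.
Qed.

Lemma Rbar_lub_exists (E : Rbar -> Prop) : exists l, Rbar_is_lub E l.
Proof.
  destruct (classic (E PInf)) as [HP|HP].
  { exists PInf; split; [intros x _; destruct x; simpl; auto|]. intros u Hu. apply Hu; auto. }
  destruct (classic (exists r, E (Fin r))) as [[r0 Hr0]|HF].
  2:{ exists MInf; split.
      - intros x Hx; destruct x; simpl; auto; exfalso; eauto.
      - intros u _; destruct u; simpl; auto. }
  set (N := fun r => E (Fin r)).
  destruct (classic (bound N)) as [Hb|Hb].
  - destruct (completeness N Hb (ex_intro _ r0 Hr0)) as [m [Hm1 Hm2]].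
    exists (Fin m); split.
    + intros x Hx; destruct x; simpl; auto; try contradiction.
    + intros u Hu; destruct u; simpl; auto.
      * apply Hm2. intros x Hx. specialize (Hu _ Hx). simpl in Hu. lra.
      * specialize (Hu _ Hr0); simpl in Hu; auto.
  - exists PInf; split; [intros x _; destruct x; simpl; auto|].
    intros u Hu; destruct u; simpl; auto.
    + apply Hb. exists r. intros x Hx. specialize (Hu _ Hx). simpl in Hu. lra.
    + specialize (Hu _ Hr0); simpl in Hu; auto.
Qed.

Lemma Rbar_inf_spec E : Rbar_is_glb E (Rbar_inf E).
Proof. unfold Rbar_inf. apply epsilon_spec, Rbar_glb_exists. Qed.

Lemma Rbar_sup_spec E : Rbar_is_lub E (Rbar_sup E).
Proof. unfold Rbar_sup. apply epsilon_spec, Rbar_lub_exists. Qed.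

(** * The box metric and distances to sets *)

Lemma pred_ext (A B : R -> Prop) : (forall x, A x <-> B x) -> A = B.
Proof.
  intros H; apply functional_extensionality; intros x.
  apply propositional_extensionality; auto.
Qed.

Lemma Rabs_le_inv x c : Rabs x <= c -> - c <= x <= c.
Proof. unfold Rabs; destruct Rcase_abs; lra. Qed.

Lemma boxd_sym x y : boxd x y = boxd y x.
Proof. unfold boxd. rewrite (Rabs_minus_sym (fst x)), (Rabs_minus_sym (snd x)). auto. Qed.

Lemma boxd_ge0 x y : 0 <= boxd x y.
Proof. unfold boxd. pose proof (Rabs_pos (fst x - fst y)). pose proof (Rmax_l (Rabs (fst x - fst y)) (Rabs (snd x - snd y))). lra. Qed.

Lemma boxd_le x y c :
  boxd x y <= c <-> Rabs (fst x - fst y) <= c /\ Rabs (snd x - snd y) <= c.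
Proof.
  unfold boxd; split.
  - pose proof (Rmax_l (Rabs (fst x - fst y)) (Rabs (snd x - snd y))).
    pose proof (Rmax_r (Rabs (fst x - fst y)) (Rabs (snd x - snd y))). lra.
  - intros [H1 H2]. apply Rmax_lub; auto.
Qed.

Lemma boxd_lt x y c :
  boxd x y < c <-> Rabs (fst x - fst y) < c /\ Rabs (snd x - snd y) < c.
Proof.
  unfold boxd; split.
  - pose proof (Rmax_l (Rabs (fst x - fst y)) (Rabs (snd x - snd y))).
    pose proof (Rmax_r (Rabs (fst x - fst y)) (Rabs (snd x - snd y))). lra.
  - intros [H1 H2]. unfold Rmax; destruct Rle_dec; lra.
Qed.

Lemma boxd0_le p c : boxd (0, 0) p <= c <-> Rabs (fst p) <= c /\ Rabs (snd p) <= c.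
Proof. rewrite boxd_le; simpl; rewrite !Rminus_0_l, !Rabs_Ropp; tauto. Qed.

Lemma boxd_triang x y z : boxd x z <= boxd x y + boxd y z.
Proof.
  apply boxd_le.
  destruct (proj1 (boxd_le x y _) (Rle_refl _)) as [A1 A2].
  destruct (proj1 (boxd_le y z _) (Rle_refl _)) as [B1 B2].
  split.
  - replace (fst x - fst z) with ((fst x - fst y) + (fst y - fst z)) by ring.
    eapply Rle_trans; [apply Rabs_triang|lra].
  - replace (snd x - snd z) with ((snd x - snd y) + (snd y - snd z)) by ring.
    eapply Rle_trans; [apply Rabs_triang|lra].
Qed.

Lemma boxd_refl x : boxd x x = 0.
Proof. unfold boxd. rewrite !Rminus_diag, Rabs_R0. unfold Rmax; destruct Rle_dec; lra. Qed.

Lemma closure2_subset A y : A y -> closure2 A y.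
Proof. intros Hy e He. exists y; split; auto. rewrite boxd_refl; auto. Qed.

Lemma dist_set_spec x S : (exists y, S y) ->
  exists d, dist_set x S = Fin d /\ 0 <= d /\ (forall y, S y -> d <= boxd x y) /\
    (forall e, 0 < e -> exists y, S y /\ boxd x y < d + e).
Proof.
  intros [y0 Hy0]. unfold dist_set.
  set (E := fun v => exists y, S y /\ v = Fin (boxd x y)).
  destruct (Rbar_inf_spec E) as [H1 H2].
  assert (Hlow : Rbar_le (Fin 0) (Rbar_inf E)).
  { apply H2. intros v [y [_ ->]]. simpl. apply boxd_ge0. }
  assert (Hup : Rbar_le (Rbar_inf E) (Fin (boxd x y0))) by (apply H1; exists y0; auto).
  destruct (Rbar_inf E) as [d| |]; simpl in *; try tauto.
  exists d; split; [auto|]; split; [auto|]; split.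
  - intros y Hy. apply (H1 (Fin (boxd x y))). exists y; auto.
  - intros e He. apply NNPP; intros Hn.
    assert (Rbar_le (Fin (d + e)) (Fin d)).
    { apply H2. intros v [y [Hy ->]]. simpl. apply Rnot_lt_le. intros Hlt. apply Hn. exists y; auto. }
    simpl in H. lra.
Qed.

Lemma dist_set_fin_spec x S d : dist_set x S = Fin d -> (exists y, S y) ->
  (forall y, S y -> d <= boxd x y) /\
  (forall e, 0 < e -> exists y, S y /\ boxd x y < d + e).
Proof.
  intros Hd Hne. destruct (dist_set_spec x S Hne) as [d' [Hd' [_ P]]].
  rewrite Hd in Hd'. inversion Hd'. subst. auto.
Qed.

Lemma le_of_le_add_small a b : (forall eta, 0 < eta < 1 -> a <= b + eta) -> a <= b.
Proof.
  intros H. apply Rle_plus_epsilon. intros eps Heps.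
  specialize (H (Rmin eps (1 / 2)) ltac:(unfold Rmin; destruct Rle_dec; lra)).
  pose proof (Rmin_l eps (1 / 2)). lra.
Qed.

Lemma dist_set_le_of_approx x A B dA dB e rad :
  dist_set x A = Fin dA -> dist_set x B = Fin dB -> (exists a, A a) -> (exists b, B b) ->
  boxd (0, 0) x + dB + 1 <= rad ->
  (forall y, B y -> boxd (0, 0) y <= rad -> exists y', A y' /\ boxd y y' <= e) ->
  dA <= dB + e.
Proof.
  intros HdA HdB HA HB Hrad Happ.
  destruct (dist_set_fin_spec x A dA HdA HA) as [A_low _].
  destruct (dist_set_fin_spec x B dB HdB HB) as [_ B_near].
  cut (dA <= dB + e + 0); [lra|].
  apply le_of_le_add_small; intros eta Heta.
  destruct (B_near eta ltac:(lra)) as [y [By Hxy]].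
  assert (Hy : boxd (0, 0) y <= rad) by (pose proof (boxd_triang (0, 0) x y); lra).
  destruct (Happ y By Hy) as [y' [Ay' Hyy']].
  pose proof (A_low y' Ay'). pose proof (boxd_triang x y y'). lra.
Qed.

Definition approx_within (M c : R) (A B : R * R -> Prop) : Prop :=
  forall a, A a -> boxd (0, 0) a <= M -> exists a', B a' /\ boxd a a' < c.

Lemma inV_sym m A B : inV m A B -> inV m B A.
Proof.
  intros [c [Hc H]]. exists c; split; auto.
  intros x Hx. destruct (H x Hx) as [d1 [d2 [H1 [H2 H12]]]].
  exists d2, d1. rewrite Rabs_minus_sym. auto.
Qed.

Lemma inV_approx m A B : (exists a, A a) -> (exists b, B b) -> inV m A B ->
  approx_within (INR m) (/ INR m) A B.
Proof.
  intros HA HB [c [Hc H]] a Aa Ha.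
  destruct (H a Ha) as [dB [dA [HdB [HdA HdAB]]]].
  destruct (dist_set_fin_spec a A dA HdA HA) as [A_low _].
  destruct (dist_set_fin_spec a B dB HdB HB) as [_ B_near].
  specialize (A_low a Aa). rewrite boxd_refl in A_low.
  apply Rabs_le_inv in HdAB.
  destruct (B_near (/ INR m - dB)) as [a' [Ba' Haa']]; [lra|].
  exists a'; split; auto. lra.
Qed.

Lemma inV_of_approx k A B r e : e < / INR k ->
  (exists a, A a /\ boxd (0, 0) a <= r) -> (exists b, B b /\ boxd (0, 0) b <= r) ->
  (forall y, A y -> boxd (0, 0) y <= 2 * INR k + r + 1 -> exists y', B y' /\ boxd y y' <= e) ->
  (forall y, B y -> boxd (0, 0) y <= 2 * INR k + r + 1 -> exists y', A y' /\ boxd y y' <= e) ->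
  inV k A B.
Proof.
  intros He [a [Aa Ha]] [b [Bb Hb]] HAB HBA.
  exists e; split; auto. intros x Hx.
  destruct (dist_set_spec x B (ex_intro _ b Bb)) as [dB [HdB [_ [B_low _]]]].
  destruct (dist_set_spec x A (ex_intro _ a Aa)) as [dA [HdA [_ [A_low _]]]].
  exists dB, dA; repeat split; auto.
  assert (Hx0 : boxd x (0, 0) <= INR k) by (rewrite boxd_sym; auto).
  pose proof (A_low a Aa). pose proof (B_low b Bb).
  pose proof (boxd_triang x (0, 0) a). pose proof (boxd_triang x (0, 0) b).
  apply Rabs_le; split.
  - enough (dA <= dB + e) by lra.
    apply (dist_set_le_of_approx x A B dA dB e (2 * INR k + r + 1)); eauto; lra.
  - enough (dB <= dA + e) by lra.
    apply (dist_set_le_of_approx x B A dB dA e (2 * INR k + r + 1)); eauto; lra.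
Qed.

(** * Continuity of [Jmap] on functions with monotone slopes *)

(** The only properties of elements of [X_Lambda] that the continuity of [Jmap] uses. *)
Definition cumulant_like (L : R -> Rbar) : Prop :=
  (forall t, L t <> MInf) /\ L 0 = Fin 0 /\
  (forall t u, t < 0 -> t < u -> u <> 0 -> Rbar_le (Jmap L t) (Jmap L u)).

Lemma Jmap_neq0 L t : t <> 0 -> Jmap L t = Rbar_div (L t) t.
Proof. intros H. unfold Jmap. destruct (Req_EM_T t 0); [contradiction|auto]. Qed.

Lemma Jmap_le_Jmap0 L : cumulant_like L -> forall t, t < 0 -> Rbar_le (Jmap L t) (Jmap L 0).
Proof.
  intros [_ [_ Hmono]] t Ht.
  unfold Jmap at 2. destruct (Req_EM_T 0 0) as [_|]; [|lra]. unfold liminf0.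
  set (inf_near := fun d => Rbar_inf (fun v => exists t0, t0 <> 0 /\ Rabs t0 < d /\ v = Rbar_div (L t0) t0)).
  apply Rbar_le_trans with (inf_near (- t)).
  - destruct (Rbar_inf_spec (fun v => exists t0, t0 <> 0 /\ Rabs t0 < - t /\ v = Rbar_div (L t0) t0)) as [_ Hglb].
    apply Hglb. intros v [t0 [Ht0 [Habs ->]]].
    rewrite <- (Jmap_neq0 L t0 Ht0).
    apply Hmono; auto. pose proof (Rabs_le_inv t0 _ (Rle_refl _)). lra.
  - apply (Rbar_sup_spec _). exists (- t); split; [lra|auto].
Qed.

Lemma Jmap_mono L : cumulant_like L -> forall t u, t < 0 -> t < u -> Rbar_le (Jmap L t) (Jmap L u).
Proof.
  intros HL t u Ht Htu. destruct (Req_dec u 0) as [->|Hu].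
  - apply Jmap_le_Jmap0; auto.
  - destruct HL as [_ [_ Hmono]]; apply Hmono; auto.
Qed.

Lemma le_of_Jmap_le_pos L t b : L t <> MInf -> 0 < t ->
  Rbar_le (Jmap L t) (Fin b) -> Rbar_le (L t) (Fin (t * b)).
Proof.
  intros Hv Ht H. rewrite Jmap_neq0 in H by lra.
  destruct (L t) as [r| |]; simpl in *; [|destruct (Rlt_dec 0 t); simpl in H; lra|congruence].
  apply Rmult_le_compat_l with (r := t) in H; [|lra].
  replace (t * (r / t)) with r in H by (field; lra). auto.
Qed.

Lemma Jmap_le_of_le_pos L t s : 0 < t -> Rbar_le (L t) (Fin s) -> Rbar_le (Jmap L t) (Fin (s / t)).
Proof.
  intros Ht H. rewrite Jmap_neq0 by lra.
  destruct (L t); simpl in *; try tauto.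
  - apply Rmult_le_compat_r; auto. left; apply Rinv_0_lt_compat; auto.
  - destruct (Rlt_dec 0 t); simpl; auto; lra.
Qed.

Lemma mul_le_of_Jmap_le_neg L t b s : t < 0 ->
  Rbar_le (Jmap L t) (Fin b) -> Rbar_le (L t) (Fin s) -> t * b <= s.
Proof.
  intros Ht H1 H2. rewrite Jmap_neq0 in H1 by lra.
  destruct (L t) as [r| |]; simpl in *; try tauto.
  - assert (t * b <= t * (r / t)) by (apply Rmult_le_compat_neg_l; lra).
    replace (t * (r / t)) with r in H by (field; lra). lra.
  - destruct (Rlt_dec 0 t); simpl in H1; [lra|tauto].
Qed.

Lemma Jmap_gt_neg L t b : L t <> MInf -> t < 0 ->
  ~ Rbar_le (Jmap L t) (Fin b) -> exists a, L t = Fin a /\ a < t * b.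
Proof.
  intros Hv Ht H. rewrite Jmap_neq0 in H by lra.
  destruct (L t) as [r| |]; simpl in *; [|destruct (Rlt_dec 0 t); simpl in H; [lra|tauto]|congruence].
  exists r; split; auto. apply Rnot_le_lt in H.
  assert (t * (r / t) < t * b) by (apply Rmult_lt_gt_compat_neg_l; lra).
  replace (t * (r / t)) with r in H0 by (field; lra). auto.
Qed.

(** Left of the origin the epigraph of [Jmap L] is stable under shifting left, and a shift by
    [tau] absorbs a perturbation of the epigraph of [L] of size [c < tau]. *)
Lemma Jmap_le_shift_left L1 L2 M c th b tau eta :
  cumulant_like L1 -> cumulant_like L2 -> th < 0 -> 0 < tau -> 0 < eta -> c < tau ->
  c * (1 + Rabs b) < tau * eta ->
  Rbar_le (Jmap L1 th) (Fin b) ->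
  Rabs (th - tau) <= M -> Rabs ((th - tau) * (b + eta)) <= M ->
  approx_within M c (epi L2) (epi L1) ->
  Rbar_le (Jmap L2 (th - tau)) (Fin (b + eta)).
Proof.
  intros N1 [Hv2 _] Hth Htau Heta Hc Hce HJ HM1 HM2 H21.
  apply NNPP; intros Hn.
  destruct (Jmap_gt_neg L2 (th - tau) (b + eta) (Hv2 _) ltac:(lra) Hn) as [a [Ha Hlt]].
  set (s0 := (th - tau) * (b + eta)).
  destruct (H21 (th - tau, s0)) as [[t s] [Hep Hd]].
  - unfold epi; simpl. rewrite Ha. simpl. unfold s0; lra.
  - apply boxd0_le; simpl. auto.
  - apply boxd_lt in Hd; simpl in Hd. destruct Hd as [Hd1 Hd2].
    apply Rabs_def2 in Hd1. apply Rabs_def2 in Hd2.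
    assert (HJt : Rbar_le (Jmap L1 t) (Fin b)).
    { apply Rbar_le_trans with (Jmap L1 th); auto. apply Jmap_mono; auto; lra. }
    pose proof (mul_le_of_Jmap_le_neg L1 t b s ltac:(lra) HJt Hep) as Hts.
    assert (Hb : Rabs (t * b - (th - tau) * b) <= c * Rabs b).
    { replace (t * b - (th - tau) * b) with ((t - (th - tau)) * b) by ring.
      rewrite Rabs_mult. apply Rmult_le_compat_r; [apply Rabs_pos|].
      apply Rabs_le; lra. }
    apply Rabs_le_inv in Hb.
    assert (th * eta < 0) by (apply Rmult_neg_pos; auto).
    unfold s0 in *. nra.
Qed.

(** Right of the origin, at distance at least [del], the map [(t, s) |-> (t, s / t)] carries
    epigraphs of [L] onto epigraphs of [Jmap L] and is Lipschitz with constant of order [1 / del]. *)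
Lemma Jmap_approx_right L1 L2 M c th b del :
  cumulant_like L1 -> 0 < c -> 2 * c <= del -> del <= th ->
  Rbar_le (Jmap L1 th) (Fin b) ->
  Rabs th <= M -> Rabs (th * b) <= M ->
  approx_within M c (epi L1) (epi L2) ->
  exists y', epi (Jmap L2) y' /\ Rabs (th - fst y') < c /\
             Rabs (b - snd y') <= 2 * c * (1 + Rabs b) / del.
Proof.
  intros [Hv1 _] Hc Hcd Hd HJ HM1 HM2 H12.
  pose proof (le_of_Jmap_le_pos L1 th b (Hv1 _) ltac:(lra) HJ) as HL.
  destruct (H12 (th, th * b)) as [[t s] [Hep Hdd]]; [auto|apply boxd0_le; auto|].
  apply boxd_lt in Hdd; simpl in Hdd. destruct Hdd as [Hd1 Hd2].
  pose proof (Rabs_def2 _ _ Hd1). pose proof (Rabs_def2 _ _ Hd2).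
  exists (t, s / t); simpl; split; [|split; auto].
  - apply Jmap_le_of_le_pos; auto. lra.
  - assert (Hb : Rabs (b * t - s) <= c * (1 + Rabs b)).
    { replace (b * t - s) with (b * (t - th) + (th * b - s)) by ring.
      eapply Rle_trans; [apply Rabs_triang|]. rewrite Rabs_mult.
      assert (Rabs (t - th) <= c) by (apply Rabs_le; lra).
      assert (Rabs b * Rabs (t - th) <= Rabs b * c) by (apply Rmult_le_compat_l; auto; apply Rabs_pos).
      lra. }
    replace (b - s / t) with ((b * t - s) / t) by (field; lra).
    unfold Rdiv. rewrite Rabs_mult, (Rabs_pos_eq (/ t)) by (left; apply Rinv_0_lt_compat; lra).
    apply Rle_trans with (c * (1 + Rabs b) * / t).
    + apply Rmult_le_compat_r; auto. left; apply Rinv_0_lt_compat; lra.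
    + replace (2 * c * (1 + Rabs b) * / del) with (c * (1 + Rabs b) * / (del / 2)) by (field; lra).
      apply Rmult_le_compat_l; [pose proof (Rabs_pos b); nra|].
      apply Rinv_le_contravar; lra.
Qed.

Lemma epi_Jmap_approx_right L1 L2 e R M c th b :
  cumulant_like L1 -> 0 < e -> 0 < c -> 8 * c < e -> 16 * c * (1 + R) < e * e ->
  R + e <= M -> (R + e) * (R + e) <= M -> approx_within M c (epi L1) (epi L2) ->
  Rbar_le (Jmap L1 th) (Fin b) -> e / 4 <= th -> Rabs th <= R -> Rabs b <= R ->
  exists y', epi (Jmap L2) y' /\ boxd (th, b) y' <= e.
Proof.
  intros N1 He Hc H8 H16 HM1 HM2 H12 Hy Hth Hth_R Hb_R.
  assert (Hthb : Rabs (th * b) <= M).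
  { rewrite Rabs_mult. pose proof (Rabs_pos th). pose proof (Rabs_pos b).
    assert (Rabs th * Rabs b <= R * R) by (apply Rmult_le_compat; auto). nra. }
  destruct (Jmap_approx_right L1 L2 M c th b (e / 4) N1 Hc ltac:(lra) Hth Hy ltac:(lra) Hthb H12)
    as [y' [Hy' [Hd1 Hd2]]].
  exists y'; split; auto. apply boxd_le; simpl. split; [lra|].
  eapply Rle_trans; [apply Hd2|].
  replace (2 * c * (1 + Rabs b) / (e / 4)) with (8 * c * (1 + Rabs b) / e) by (field; lra).
  apply Rmult_le_reg_r with e; auto. unfold Rdiv. rewrite Rmult_assoc, Rinv_l by lra.
  pose proof (Rabs_pos b). nra.
Qed.

Lemma epi_Jmap_approx_left L1 L2 e R M c th b :
  cumulant_like L1 -> cumulant_like L2 -> 0 < e -> 0 < c -> 8 * c < e -> 16 * c * (1 + R) < e * e ->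
  R + e <= M -> (R + e) * (R + e) <= M -> approx_within M c (epi L2) (epi L1) ->
  Rbar_le (Jmap L1 th) (Fin b) -> th < e / 4 -> Rabs th <= R -> Rabs b <= R ->
  exists y', epi (Jmap L2) y' /\ boxd (th, b) y' <= e.
Proof.
  intros N1 N2 He Hc H8 H16 HM1 HM2 H21 Hy Hth Hth_R Hb_R.
  pose proof (Rabs_le_inv _ _ Hth_R). pose proof (Rabs_le_inv _ _ Hb_R).
  set (th0 := Rmin th (- (e / 4))).
  assert (Hth0 : th0 < 0 /\ th0 <= th /\ - R - e / 4 <= th0 /\ Rabs (th - (th0 - e / 4)) <= e).
  { unfold th0, Rmin; destruct Rle_dec; repeat split; try lra; apply Rabs_le; lra. }
  destruct Hth0 as [Ht0 [Ht0th [Ht0R Hdist]]].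
  assert (HJ0 : Rbar_le (Jmap L1 th0) (Fin b)).
  { destruct Ht0th as [Hlt|Heq]; [|rewrite Heq; auto].
    apply Rbar_le_trans with (Jmap L1 th); auto. apply Jmap_mono; auto. }
  exists (th0 - e / 4, b + e / 4); split.
  - unfold epi; simpl. apply (Jmap_le_shift_left L1 L2 M c); auto; try lra.
    + nra.
    + apply Rabs_le; lra.
    + rewrite Rabs_mult.
      assert (Rabs (th0 - e / 4) <= R + e) by (apply Rabs_le; lra).
      assert (Rabs (b + e / 4) <= R + e) by (apply Rabs_le; lra).
      assert (Rabs (th0 - e / 4) * Rabs (b + e / 4) <= (R + e) * (R + e))
        by (apply Rmult_le_compat; auto; apply Rabs_pos).
      lra.
  - apply boxd_le; simpl. split; auto. apply Rabs_le; lra.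
Qed.

Lemma closure_epi_Jmap_approx L1 L2 e R M c :
  cumulant_like L1 -> cumulant_like L2 -> 0 < e -> 0 < c -> 8 * c < e ->
  16 * c * (1 + (R + 1)) < e * e -> R + 1 + e <= M -> (R + 1 + e) * (R + 1 + e) <= M ->
  approx_within M c (epi L1) (epi L2) -> approx_within M c (epi L2) (epi L1) ->
  forall y, closure2 (epi (Jmap L1)) y -> boxd (0, 0) y <= R ->
  exists y', closure2 (epi (Jmap L2)) y' /\ boxd y y' <= 2 * e.
Proof.
  intros N1 N2 He Hc H8 H16 HM1 HM2 H12 H21 y Hy HyR.
  destruct (Hy (Rmin e 1) ltac:(unfold Rmin; destruct Rle_dec; lra)) as [[th b] [Hz Hyz]].
  pose proof (Rmin_l e 1). pose proof (Rmin_r e 1).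
  assert (Hz0 : boxd (0, 0) (th, b) <= R + 1) by (pose proof (boxd_triang (0, 0) y (th, b)); lra).
  apply boxd0_le in Hz0; simpl in Hz0. destruct Hz0 as [Hth Hb].
  assert (Happrox : exists y', epi (Jmap L2) y' /\ boxd (th, b) y' <= e).
  { destruct (Rle_dec (e / 4) th).
    - apply (epi_Jmap_approx_right L1 L2 e (R + 1) M c); auto.
    - apply (epi_Jmap_approx_left L1 L2 e (R + 1) M c); auto; lra. }
  destruct Happrox as [y' [Hy' Hzy']].
  exists y'; split; [apply closure2_subset; auto|].
  pose proof (boxd_triang y (th, b) y'). lra.
Qed.

Lemma approx_within_mono M M' c c' A B : M' <= M -> c <= c' ->
  approx_within M c A B -> approx_within M' c' A B.
Proof.
  intros HM Hc H a Aa Ha. destruct (H a Aa ltac:(lra)) as [a' [? ?]].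
  exists a'; split; auto; lra.
Qed.

Lemma epi_origin L : cumulant_like L -> epi L (0, 0).
Proof. intros [_ [H0 _]]. unfold epi; simpl. rewrite H0; simpl; lra. Qed.

Lemma nat_ge1_above X : exists n : nat, (1 <= n)%nat /\ X <= INR n.
Proof.
  destruct (INR_unbounded (Rmax X 1)) as [n Hn].
  exists n; split.
  - destruct n; [simpl in Hn; pose proof (Rmax_r X 1); lra|lia].
  - pose proof (Rmax_l X 1); lra.
Qed.

Lemma nat_large_inv_small M c : 0 < c -> exists m : nat, (1 <= m)%nat /\ M <= INR m /\ / INR m <= c.
Proof.
  intros Hc. destruct (nat_ge1_above (Rmax M (/ c))) as [m [Hm Hm_large]].
  pose proof (Rmax_l M (/ c)). pose proof (Rmax_r M (/ c)).
  exists m; repeat split; [auto|lra|].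
  rewrite <- (Rinv_inv c). apply Rinv_le_contravar; [apply Rinv_0_lt_compat|]; lra.
Qed.

Lemma epi_Jmap_at_neg1 f : cumulant_like f -> exists b, epi (Jmap f) (-1, b).
Proof.
  intros [Hv _]. unfold epi; simpl. rewrite Jmap_neq0 by lra.
  specialize (Hv (-1)). destruct (f (-1)) as [a| |]; [| |congruence].
  - exists (a / -1). simpl; lra.
  - exists 0. simpl. destruct (Rlt_dec 0 (-1)); simpl; auto; lra.
Qed.

Lemma approx_parameters e R : 0 < e <= 1 -> 0 <= R ->
  exists c M, 0 < c /\ 8 * c < e /\ 16 * c * (1 + (R + 1)) < e * e /\
    R + 1 + e <= M /\ (R + 1 + e) * (R + 1 + e) <= M.
Proof.
  intros He HR. exists (e * e / (32 * (1 + (R + 1)))), ((R + 1 + e) * (R + 1 + e) + (R + 1 + e)).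
  repeat split; try nra.
  - apply Rdiv_lt_0_compat; nra.
  - apply Rmult_lt_reg_r with (32 * (1 + (R + 1))); [lra|].
    field_simplify; [nra|lra].
  - field_simplify; [nra|lra].
Qed.

Lemma Jmap_AW_continuous f : cumulant_like f ->
  forall k : nat, (1 <= k)%nat ->
  exists m : nat, (1 <= m)%nat /\
    forall g, cumulant_like g -> inV m (epi f) (epi g) ->
      inV k (closure2 (epi (Jmap f))) (closure2 (epi (Jmap g))).
Proof.
  intros Nf k Hk.
  assert (Hkk : 1 <= INR k) by (apply (le_INR 1); auto).
  set (e := / (4 * INR k)).
  assert (He : 0 < e <= 1 / 4).
  { unfold e. split; [apply Rinv_0_lt_compat; lra|].
    replace (1 / 4) with (/ 4) by field. apply Rinv_le_contravar; lra. }
  (* a point of [epi (Jmap f)] near the origin; its partner does the same job for [Jmap g] *)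
  destruct (epi_Jmap_at_neg1 f Nf) as [b0 Hy0].
  set (r := 2 + Rabs b0).
  assert (Hy0r : boxd (0, 0) (-1, b0) + 1 <= r).
  { enough (boxd (0, 0) (-1, b0) <= 1 + Rabs b0) by (unfold r; lra).
    apply boxd0_le; simpl. rewrite Rabs_left by lra. pose proof (Rabs_pos b0). lra. }
  set (Rad := 2 * INR k + r + 1).
  destruct (approx_parameters e Rad ltac:(lra) ltac:(unfold Rad, r; pose proof (Rabs_pos b0); lra))
    as [c [M [Hc [H8 [H16 [HM1 HM2]]]]]].
  destruct (nat_large_inv_small M c Hc) as [m [Hm [HmM Hmc]]].
  exists m; split; auto.
  intros g Ng HV.
  pose proof (ex_intro _ _ (epi_origin f Nf)) as Ef. pose proof (ex_intro _ _ (epi_origin g Ng)) as Eg.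
  pose proof (inV_approx m _ _ Ef Eg HV) as Hfg.
  pose proof (inV_approx m _ _ Eg Ef (inV_sym m _ _ HV)) as Hgf.
  apply approx_within_mono with (M' := M) (c' := c) in Hfg, Hgf; auto.
  pose proof (closure_epi_Jmap_approx f g e Rad M c Nf Ng ltac:(lra) Hc H8 H16 HM1 HM2 Hfg Hgf) as Pfg.
  pose proof (closure_epi_Jmap_approx g f e Rad M c Ng Nf ltac:(lra) Hc H8 H16 HM1 HM2 Hgf Hfg) as Pgf.
  destruct (Pfg (-1, b0) (closure2_subset _ _ Hy0) ltac:(unfold Rad; lra)) as [y0' [Hy0' Hd0]].
  apply (inV_of_approx k _ _ r (2 * e)); [| |exists y0'; split; auto|auto|auto].
  - unfold e. replace (2 * / (4 * INR k)) with (/ (2 * INR k)) by (field; lra).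
    apply Rinv_lt_contravar; nra.
  - exists (-1, b0); split; [apply closure2_subset; auto|lra].
  - pose proof (boxd_triang (0, 0) (-1, b0) y0'). lra.
Qed.

(** * Borel sets and probability measures *)

Lemma borel_ext A B : (forall x, A x <-> B x) -> borel A -> borel B.
Proof. intros H HA. rewrite <- (pred_ext A B H); auto. Qed.

Lemma borel_True : borel (fun _ => True).
Proof. apply borel_open. intros x _. exists (mkposreal 1 Rlt_0_1). intros y _; auto. Qed.

Lemma borel_False : borel (fun _ => False).
Proof. apply borel_ext with (fun x => ~ True); [intros; tauto|apply borel_compl, borel_True]. Qed.

Lemma borel_or A B : borel A -> borel B -> borel (fun x => A x \/ B x).
Proof.
  intros HA HB. apply borel_ext with (fun x => exists n : nat, (match n with O => A | _ => B end) x).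
  - intros x; split.
    + intros [[|n] H]; auto.
    + intros [H|H]; [exists O|exists 1%nat]; auto.
  - apply borel_union. intros [|n]; auto.
Qed.

Lemma borel_and A B : borel A -> borel B -> borel (fun x => A x /\ B x).
Proof.
  intros HA HB. apply borel_ext with (fun x => ~ (~ A x \/ ~ B x)); [intros x; tauto|].
  apply borel_compl, borel_or; apply borel_compl; auto.
Qed.

Lemma borel_gt a : borel (fun t => a < t).
Proof.
  apply borel_open. intros x Hx. exists (mkposreal (x - a) ltac:(lra)).
  intros y Hy. unfold disc in Hy; simpl in Hy. apply Rabs_def2 in Hy. lra.
Qed.

Lemma borel_lt b : borel (fun t => t < b).
Proof.
  apply borel_open. intros x Hx. exists (mkposreal (b - x) ltac:(lra)).
  intros y Hy. unfold disc in Hy; simpl in Hy. apply Rabs_def2 in Hy. lra.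
Qed.

Lemma borel_Ico a b : borel (fun t => a <= t < b).
Proof.
  apply borel_and; [|apply borel_lt].
  apply borel_ext with (fun t => ~ (t < a)); [intros; split; intros; lra|apply borel_compl, borel_lt].
Qed.

Lemma borel_abs_lt c : borel (fun t => Rabs t < c).
Proof.
  apply borel_ext with (fun t => - c < t /\ t < c).
  - intros t; split; [intros [H1 H2]; apply Rabs_def1; auto|intros H; apply Rabs_def2 in H; lra].
  - apply borel_and; [apply borel_gt|apply borel_lt].
Qed.

Lemma borel_abs_ge c : borel (fun t => c <= Rabs t).
Proof.
  apply borel_ext with (fun t => ~ (Rabs t < c)); [intros; split; intros; lra|].
  apply borel_compl, borel_abs_lt.
Qed.

Lemma infinite_sum_eventually_const (s : nat -> R) K l : infinite_sum s l ->
  (forall n, (1 <= n)%nat -> sum_f_R0 s n = K) -> K = l.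
Proof.
  intros Hs HK. apply NNPP; intros Hne.
  assert (He : Rabs (K - l) > 0) by (apply Rabs_pos_lt; lra).
  destruct (Hs _ He) as [N HN]. specialize (HN (S N) ltac:(lia)).
  rewrite HK in HN by lia. unfold Rdist in HN. lra.
Qed.

Section ProbabilityMeasure.

Variable mu : (R -> Prop) -> R.
Hypothesis Pmu : is_prob_measure mu.

Lemma mu_ext A B : (forall x, A x <-> B x) -> mu A = mu B.
Proof. intros H; rewrite (pred_ext A B H); auto. Qed.

Lemma mu_ge0 A : borel A -> 0 <= mu A.
Proof. destruct Pmu as [H _]; auto. Qed.

Lemma mu_full : mu (fun _ => True) = 1.
Proof. destruct Pmu as [_ [H _]]; auto. Qed.

Lemma mu_False : mu (fun _ => False) = 0.
Proof.
  destruct Pmu as [_ [_ Hadd]].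
  specialize (Hadd (fun _ _ => False) (fun _ => borel_False) ltac:(intros; auto)). cbv beta in Hadd.
  rewrite (mu_ext (fun x => exists n : nat, False) (fun _ => False)) in Hadd
    by (intros x; split; [intros [_ []]|tauto]).
  set (m := mu (fun _ => False)) in *.
  (* countable additivity makes the partial sums [(n + 1) m] converge to [m] *)
  apply NNPP; intros Hne.
  assert (He : Rabs m > 0) by (apply Rabs_pos_lt; auto).
  destruct (Hadd _ He) as [N HN]. specialize (HN (S N) ltac:(lia)).
  rewrite sum_cte in HN. unfold Rdist in HN.
  replace (m * INR (S (S N)) - m) with (m * INR (S N)) in HN by (rewrite (S_INR (S N)); ring).
  rewrite Rabs_mult, (Rabs_pos_eq (INR (S N))) in HN by apply pos_INR.
  assert (1 <= INR (S N)) by (apply (le_INR 1); lia).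
  assert (Rabs m * 1 <= Rabs m * INR (S N)) by (apply Rmult_le_compat_l; auto; apply Rabs_pos).
  lra.
Qed.

Lemma mu_empty A : (forall x, ~ A x) -> mu A = 0.
Proof. intros H. rewrite (mu_ext A (fun _ => False)); [apply mu_False|firstorder]. Qed.

Lemma mu_or A B : borel A -> borel B -> (forall x, A x -> B x -> False) ->
  mu (fun x => A x \/ B x) = mu A + mu B.
Proof.
  intros HA HB Hd. destruct Pmu as [_ [_ Hadd]].
  set (F := fun n : nat => match n with O => A | 1%nat => B | _ => fun _ : R => False end).
  assert (HF : forall n, borel (F n)) by (intros [|[|n]]; simpl; auto; apply borel_False).
  assert (HD : forall n m x, n <> m -> F n x -> F m x -> False).
  { intros [|[|n]] [|[|m]] x Hnm; simpl; intros; eauto; lia. }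
  specialize (Hadd F HF HD).
  rewrite (mu_ext (fun x => exists n, F n x) (fun x => A x \/ B x)) in Hadd.
  - symmetry. apply (infinite_sum_eventually_const _ _ _ Hadd).
    intros n Hn. destruct n; [lia|]. clear Hn. induction n; [auto|].
    rewrite tech5, IHn. simpl F. rewrite mu_False; ring.
  - intros x; split.
    + intros [[|[|n]] H]; simpl in H; auto; tauto.
    + intros [H|H]; [exists O|exists 1%nat]; auto.
Qed.

Lemma mu_split A B : borel A -> borel B ->
  mu A = mu (fun x => A x /\ B x) + mu (fun x => A x /\ ~ B x).
Proof.
  intros HA HB. rewrite <- mu_or.
  - apply mu_ext. intros x; split; [intros H; destruct (classic (B x)); auto|intros [[H _]|[H _]]; auto].
  - apply borel_and; auto.
  - apply borel_and; auto. apply borel_compl; auto.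
  - intros x [_ H1] [_ H2]; auto.
Qed.

Lemma mu_mono A B : borel A -> borel B -> (forall x, A x -> B x) -> mu A <= mu B.
Proof.
  intros HA HB Hs.
  rewrite (mu_split B A HB HA), (mu_ext (fun x => B x /\ A x) A) by firstorder.
  pose proof (mu_ge0 (fun x => B x /\ ~ A x) (borel_and _ _ HB (borel_compl _ HA))). lra.
Qed.

Lemma scal_mu_le A c K : borel A -> (forall x, A x -> c <= K) -> c * mu A <= K * mu A.
Proof.
  intros HA H. destruct (classic (exists x, A x)) as [[x Hx]|Hn].
  - apply Rmult_le_compat_r; [apply mu_ge0; auto|apply (H x Hx)].
  - rewrite mu_empty; [lra|]. intros x Hx; apply Hn; eauto.
Qed.

End ProbabilityMeasure.

(** * Simple functions and the integral *)

Definition piece := (R * (R -> Prop))%type.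

Definition piece_below (g : R -> R) (a : piece) : Prop :=
  0 <= fst a /\ borel (snd a) /\ forall x, snd a x -> fst a <= g x.

Definition disjoint_pieces (a b : piece) : Prop := forall x, snd a x -> snd b x -> False.

Fixpoint pairwise_disjoint (l : list piece) : Prop :=
  match l with
  | nil => True
  | a :: l => (forall b, In b l -> disjoint_pieces a b) /\ pairwise_disjoint l
  end.

Lemma simple_below_iff mu g l :
  simple_below mu g l <-> (forall a, In a l -> piece_below g a) /\ pairwise_disjoint l.
Proof.
  set (d0 := (0, fun _ : R => False) : piece).
  unfold simple_below; split.
  - intros [H1 H2]. split.
    + intros a Ha. destruct (In_nth l a d0 Ha) as [i [Hi <-]]. apply H1; auto.
    + clear H1. induction l as [|a l IH]; simpl; auto. split.
      * intros b Hb x Ha Hbx. destruct (In_nth l b d0 Hb) as [j [Hj <-]].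
        apply (H2 0%nat (S j) x); simpl; auto; lia.
      * apply IH. intros i j x Hi Hj Hij. apply (H2 (S i) (S j) x); simpl; lia.
  - intros [H1 H2]. split.
    + intros i Hi. apply H1, nth_In; auto.
    + clear H1. induction l as [|a l IH]; simpl; intros i j x Hi Hj Hij; [lia|].
      destruct H2 as [Ha Hl]. destruct i as [|i], j as [|j]; [lia| | |apply IH; auto; lia].
      * intros H H'. apply (Ha (nth j l d0) ltac:(apply nth_In; lia) x H H').
      * intros H H'. apply (Ha (nth i l d0) ltac:(apply nth_In; lia) x H' H).
Qed.

Lemma simple_integral_app mu l1 l2 :
  simple_integral mu (l1 ++ l2) = simple_integral mu l1 + simple_integral mu l2.
Proof. induction l1 as [|a l IH]; simpl; [ring|]. rewrite IH; ring. Qed.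

Lemma pairwise_disjoint_app l1 l2 : pairwise_disjoint l1 -> pairwise_disjoint l2 ->
  (forall a b, In a l1 -> In b l2 -> disjoint_pieces a b) -> pairwise_disjoint (l1 ++ l2).
Proof.
  induction l1 as [|a l IH]; simpl; auto. intros [Ha Hl] H2 Hc. split.
  - intros b Hb. apply in_app_or in Hb. destruct Hb; auto.
  - apply IH; auto.
Qed.

Lemma simple_integral_le_integral mu g l :
  simple_below mu g l -> Rbar_le (Fin (simple_integral mu l)) (integral_nonneg mu g).
Proof. intros H. apply (Rbar_sup_spec _). eauto. Qed.

Lemma integral_le mu g K :
  (forall l, simple_below mu g l -> simple_integral mu l <= K) -> Rbar_le (integral_nonneg mu g) (Fin K).
Proof. intros H. apply (Rbar_sup_spec _). intros v [l [Hl ->]]. simpl; auto. Qed.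

Section SimpleIntegral.

Variable mu : (R -> Prop) -> R.
Hypothesis Pmu : is_prob_measure mu.

Definition pieces_union (l : list piece) (x : R) : Prop := exists a, In a l /\ snd a x.

Lemma simple_integral_le_union g l : (forall x, g x <= 1) ->
  (forall a, In a l -> piece_below g a) -> pairwise_disjoint l ->
  borel (pieces_union l) /\ simple_integral mu l <= mu (pieces_union l).
Proof.
  intros Hg. induction l as [|a l IH]; simpl; intros Hbelow Hdisj.
  - assert (He : forall x, ~ pieces_union nil x) by (intros x [a [[] _]]).
    split; [apply borel_ext with (fun _ => False); [firstorder|apply borel_False]|].
    rewrite (mu_empty mu Pmu); auto; lra.
  - destruct Hdisj as [Ha Hl]. destruct (IH (fun b Hb => Hbelow b (or_intror Hb)) Hl) as [HB Hs].
    destruct (Hbelow a (or_introl eq_refl)) as [Hc [Hba Hle]].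
    assert (Hext : forall x, pieces_union (a :: l) x <-> snd a x \/ pieces_union l x).
    { intros x; split.
      - intros [b [[<-|Hb] Hx]]; [left; auto|right; exists b; auto].
      - intros [H|[b [Hb H]]]; [exists a; simpl; auto|exists b; simpl; auto]. }
    split; [apply borel_ext with (fun x => snd a x \/ pieces_union l x); [firstorder|apply borel_or; auto]|].
    rewrite (mu_ext mu _ _ Hext), (mu_or mu Pmu); auto.
    + assert (fst a * mu (snd a) <= 1 * mu (snd a)).
      { apply (scal_mu_le mu Pmu); auto. intros x Hx. apply Rle_trans with (g x); auto. }
      lra.
    + intros x H1 [b [Hb H2]]. apply (Ha b Hb x); auto.
Qed.

Lemma mgf_0 : mgf mu 0 = Fin 1.
Proof.
  unfold mgf. apply Rbar_le_antisym.
  - apply integral_le. intros l Hl. apply simple_below_iff in Hl. destruct Hl as [H1 H2].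
    destruct (simple_integral_le_union (fun x => exp (0 * x)) l) as [HB Hs]; auto.
    + intros x. rewrite Rmult_0_l, exp_0; lra.
    + pose proof (mu_mono mu Pmu _ _ HB borel_True (fun _ _ => I)). rewrite (mu_full mu Pmu) in H. lra.
  - replace 1 with (simple_integral mu ((1, fun _ => True) :: nil))
      by (simpl; rewrite (mu_full mu Pmu); ring).
    apply simple_integral_le_integral, simple_below_iff. split; [|simpl; split; [intros _ []|auto]].
    intros a [<-|[]]. split; simpl; [lra|split; [apply borel_True|]].
    intros x _. rewrite Rmult_0_l, exp_0; lra.
Qed.

Lemma nat_floor x : 0 <= x -> exists n : nat, INR n <= x < INR n + 1.
Proof.
  intros Hx. destruct (INR_unbounded x) as [M HM].
  induction M as [|M IH]; [simpl in HM; lra|].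
  destruct (Rlt_dec x (INR M)) as [H|H]; [apply IH; lra|].
  exists M. rewrite S_INR in HM. lra.
Qed.

Lemma mu_tail_small e : 0 < e -> exists N : nat, mu (fun t => INR N <= Rabs t) < e.
Proof.
  intros He.
  set (shell := fun (n : nat) (t : R) => INR n <= Rabs t < INR n + 1).
  assert (Hshell : forall n, borel (shell n)) by (intros n; apply borel_and; [apply borel_abs_ge|apply borel_abs_lt]).
  assert (Hdisj : forall n m x, n <> m -> shell n x -> shell m x -> False).
  { intros n m x Hnm [H1 H2] [H3 H4]. apply Hnm.
    destruct (Nat.lt_total n m) as [H|[H|H]]; auto; apply le_INR in H; rewrite S_INR in H; lra. }
  pose proof Pmu as [_ [Hfull Hadd]].
  specialize (Hadd shell Hshell Hdisj).
  rewrite (mu_ext mu (fun x => exists n, shell n x) (fun _ => True)), Hfull in Hadd.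
  2:{ intros x; split; auto. intros _. destruct (nat_floor (Rabs x) (Rabs_pos x)) as [n Hn]. exists n; auto. }
  assert (Hball : forall n, mu (fun t => Rabs t < INR (S n)) = sum_f_R0 (fun i => mu (shell i)) n).
  { induction n.
    - simpl. apply mu_ext. intros t; unfold shell; simpl. pose proof (Rabs_pos t); split; intros; lra.
    - rewrite tech5, <- IHn.
      rewrite (mu_ext mu _ (fun t => Rabs t < INR (S n) \/ shell (S n) t)).
      + apply (mu_or mu Pmu); auto; [apply borel_abs_lt|]. intros t H1 H2. unfold shell in H2. lra.
      + intros t. unfold shell. rewrite !S_INR.
        split; [intros H; destruct (Rlt_dec (Rabs t) (INR n + 1)); [left|right]|intros [H|H]]; lra. }
  destruct (Hadd e He) as [N HN].
  exists (S N).
  pose proof (mu_split mu Pmu (fun _ => True) (fun t => Rabs t < INR (S N)) borel_True (borel_abs_lt _)) as Hsplit.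
  cbv beta in Hsplit.
  rewrite (mu_ext mu (fun x => True /\ Rabs x < INR (S N)) (fun t => Rabs t < INR (S N))) in Hsplit by tauto.
  rewrite (mu_ext mu (fun x => True /\ ~ Rabs x < INR (S N)) (fun t => INR (S N) <= Rabs t)) in Hsplit
    by (intros; split; [intros [_ H]; lra|intros H; split; auto; lra]).
  rewrite Hball, Hfull in Hsplit. specialize (HN N (Nat.le_refl _)). unfold Rdist in HN.
  apply Rabs_def2 in HN. lra.
Qed.

End SimpleIntegral.

(** * Hoelder's inequality for moment generating functions *)

Fixpoint sum_upto (G : nat -> R) (K : nat) : R :=
  match K with O => 0 | S K => sum_upto G K + G K end.

Definition sum_pieces (F : piece -> R) (l : list piece) : R :=
  fold_right (fun a acc => F a + acc) 0 l.

Lemma sum_upto_scal (F : nat -> R) c K : sum_upto (fun j => c * F j) K = c * sum_upto F K.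
Proof. induction K; simpl; [ring|rewrite IHK; ring]. Qed.

Lemma sum_upto_le (F X Y : nat -> R) al be K :
  (forall j, (j < K)%nat -> F j <= al * X j + be * Y j) ->
  sum_upto F K <= al * sum_upto X K + be * sum_upto Y K.
Proof.
  induction K; simpl; intros H; [lra|].
  pose proof (IHK (fun j Hj => H j ltac:(lia))). specialize (H K ltac:(lia)). lra.
Qed.

Lemma sum_pieces_le (F X Y Z : piece -> R) al be l :
  (forall a, In a l -> F a <= al * X a + be * Y a + Z a) ->
  sum_pieces F l <= al * sum_pieces X l + be * sum_pieces Y l + sum_pieces Z l.
Proof.
  induction l; simpl; intros H; [lra|].
  pose proof (IHl (fun b Hb => H b (or_intror Hb))). specialize (H a (or_introl eq_refl)). lra.
Qed.

Lemma sum_pieces_fst_scal l m : sum_pieces (fun a => fst a * m) l = sum_pieces fst l * m.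
Proof. induction l; simpl; [ring|rewrite IHl; ring]. Qed.

Lemma sum_pieces_fst_ge0 g l : (forall a, In a l -> piece_below g a) -> 0 <= sum_pieces fst l.
Proof.
  induction l; simpl; intros H; [lra|].
  destruct (H a (or_introl eq_refl)) as [Ha _].
  pose proof (IHl (fun b Hb => H b (or_intror Hb))). lra.
Qed.

Lemma simple_integral_flat_map mu (F : piece -> list piece) l :
  simple_integral mu (flat_map F l) = sum_pieces (fun a => simple_integral mu (F a)) l.
Proof. induction l; simpl; auto. rewrite simple_integral_app, IHl. auto. Qed.

Definition cell (a0 h : R) (j : nat) (t : R) : Prop := a0 + INR j * h <= t < a0 + INR (S j) * h.

Fixpoint cell_pieces (kap : nat -> R) (A : R -> Prop) (a0 h : R) (K : nat) : list piece :=
  match K with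
  | O => nil
  | S K => cell_pieces kap A a0 h K ++ ((kap K, fun t => A t /\ cell a0 h K t) :: nil)
  end.

Lemma cell_disjoint a0 h i j t : 0 < h -> i <> j -> cell a0 h i t -> cell a0 h j t -> False.
Proof.
  intros Hh Hij [H1 H2] [H3 H4]. rewrite S_INR in *.
  destruct (Nat.lt_total i j) as [H|[H|H]]; [|lia|]; apply le_INR in H; rewrite S_INR in H; nra.
Qed.

Lemma simple_integral_cell_pieces mu kap A a0 h K :
  simple_integral mu (cell_pieces kap A a0 h K)
  = sum_upto (fun j => kap j * mu (fun t => A t /\ cell a0 h j t)) K.
Proof. induction K; simpl; auto. rewrite simple_integral_app, IHK. simpl. ring. Qed.

Lemma in_cell_pieces kap A a0 h K q : In q (cell_pieces kap A a0 h K) ->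
  exists j, (j < K)%nat /\ q = (kap j, fun t => A t /\ cell a0 h j t).
Proof.
  induction K; simpl; [tauto|]. intros H. apply in_app_or in H. destruct H as [H|[H|[]]].
  - destruct (IHK H) as [j [Hj ->]]. exists j; split; auto; lia.
  - exists K; split; auto.
Qed.

Lemma pairwise_disjoint_cell_pieces kap A a0 h K : 0 < h ->
  pairwise_disjoint (cell_pieces kap A a0 h K).
Proof.
  intros Hh. induction K; simpl; auto. apply pairwise_disjoint_app; auto.
  - simpl; split; auto. intros _ [].
  - intros a b Ha [<-|[]]. destruct (in_cell_pieces _ _ _ _ _ _ Ha) as [j [Hj ->]].
    intros x [_ H1] [_ H2]. simpl in *. apply (cell_disjoint a0 h j K x); auto; lia.
Qed.

Lemma pairwise_disjoint_flat_map_cells kap a0 h K l : 0 < h -> pairwise_disjoint l ->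
  pairwise_disjoint (flat_map (fun a => cell_pieces kap (snd a) a0 h K) l).
Proof.
  intros Hh. induction l as [|a l IH]; simpl; auto. intros [Ha Hl].
  apply pairwise_disjoint_app; auto; [apply pairwise_disjoint_cell_pieces; auto|].
  intros q q' Hq Hq'. apply in_flat_map in Hq'. destruct Hq' as [b [Hb Hq']].
  destruct (in_cell_pieces _ _ _ _ _ _ Hq) as [j [_ ->]].
  destruct (in_cell_pieces _ _ _ _ _ _ Hq') as [j' [_ ->]].
  intros x [H1 _] [H2 _]. apply (Ha b Hb x); auto.
Qed.

Lemma mu_cells mu a0 h A K : is_prob_measure mu -> 0 < h -> borel A ->
  mu (fun t => A t /\ a0 <= t < a0 + INR K * h)
  = sum_upto (fun j => mu (fun t => A t /\ cell a0 h j t)) K.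
Proof.
  intros Pm Hh HA. induction K; cbn [sum_upto].
  - apply (mu_empty mu Pm). intros t [_ H]. simpl in H. lra.
  - rewrite <- IHK, <- (mu_or mu Pm).
    + apply (mu_ext mu). intros t. unfold cell. rewrite S_INR.
      assert (0 <= INR K * h) by (apply Rmult_le_pos; [apply pos_INR|lra]).
      split.
      * intros [HAt Ht]. destruct (Rlt_dec t (a0 + INR K * h)); [left|right]; repeat split; auto; lra.
      * intros [[HAt Ht]|[HAt Ht]]; repeat split; auto; lra.
    + apply borel_and; auto. apply borel_Ico.
    + apply borel_and; auto. apply borel_Ico.
    + intros t [_ H1] [_ H2]. unfold cell in H2. lra.
Qed.

Lemma exp_le_exp a b : a <= b -> exp a <= exp b.
Proof. intros [H|H]; [left; apply exp_increasing; auto|subst; lra]. Qed.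

Lemma exp_convex s a b : 0 <= s <= 1 -> exp (s * a + (1 - s) * b) <= s * exp a + (1 - s) * exp b.
Proof.
  intros Hs. set (M := s * a + (1 - s) * b).
  (* tangent line of [exp] at [M] *)
  assert (Ha : exp M * (1 + (a - M)) <= exp a).
  { replace (exp a) with (exp M * exp (a - M)) by (rewrite <- exp_plus; f_equal; ring).
    apply Rmult_le_compat_l; [left; apply exp_pos|apply exp_ineq1_le]. }
  assert (Hb : exp M * (1 + (b - M)) <= exp b).
  { replace (exp b) with (exp M * exp (b - M)) by (rewrite <- exp_plus; f_equal; ring).
    apply Rmult_le_compat_l; [left; apply exp_pos|apply exp_ineq1_le]. }
  assert (exp M = s * (exp M * (1 + (a - M))) + (1 - s) * (exp M * (1 + (b - M)))) by (unfold M; ring).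
  nra.
Qed.

(** Young's inequality [u^s v^(1-s) <= s u + (1 - s) v] with [u = e^P / U] and [v = e^Q / V]. *)
Lemma exp_mix_le s P Q U V : 0 <= s <= 1 -> 0 < U -> 0 < V ->
  exp (s * P + (1 - s) * Q)
  <= exp (s * ln U + (1 - s) * ln V) * (s / U * exp P + (1 - s) / V * exp Q).
Proof.
  intros Hs HU HV.
  replace (s * P + (1 - s) * Q)
    with ((s * (P - ln U) + (1 - s) * (Q - ln V)) + (s * ln U + (1 - s) * ln V)) by ring.
  rewrite exp_plus, Rmult_comm. apply Rmult_le_compat_l; [left; apply exp_pos|].
  eapply Rle_trans; [apply exp_convex; auto|].
  unfold Rminus at 1 3. rewrite !exp_plus, !exp_Ropp, !exp_ln by auto.
  right; unfold Rdiv; ring.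
Qed.

Definition cell_min (x a0 h : R) (j : nat) : R := x * (a0 + INR j * h) - Rabs x * h.

Lemma cell_linear_bounds x a0 h j t : 0 < h -> cell a0 h j t ->
  cell_min x a0 h j <= x * t <= cell_min x a0 h j + 2 * Rabs x * h.
Proof.
  intros Hh [H1 H2]. rewrite S_INR in H2. unfold cell_min.
  set (d := t - (a0 + INR j * h)).
  replace (x * t) with (x * (a0 + INR j * h) + x * d) by (unfold d; ring).
  pose proof (Rabs_le_inv x _ (Rle_refl _)).
  assert (- Rabs x * d <= x * d <= Rabs x * d) by (unfold d in *; nra).
  assert (Rabs x * d <= Rabs x * h) by (apply Rmult_le_compat_l; [apply Rabs_pos|unfold d; lra]).
  lra.
Qed.

Lemma cell_pieces_simple_below mu x a0 h K l : 0 < h ->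
  (forall a, In a l -> borel (snd a)) -> pairwise_disjoint l ->
  simple_below mu (fun t => exp (x * t))
    (flat_map (fun a => cell_pieces (fun j => exp (cell_min x a0 h j)) (snd a) a0 h K) l).
Proof.
  intros Hh Hl Hdisj. apply simple_below_iff.
  split; [|apply pairwise_disjoint_flat_map_cells; auto].
  intros q Hq. apply in_flat_map in Hq. destruct Hq as [a [Ha Hq]].
  destruct (in_cell_pieces _ _ _ _ _ _ Hq) as [j [_ ->]].
  split; [left; apply exp_pos|split; [apply borel_and; [auto|apply borel_Ico]|]].
  intros t [_ Ht]. simpl. apply exp_le_exp. apply (cell_linear_bounds x a0 h j t Hh Ht).
Qed.

Lemma exp_mix_cell_bound s x y U V a0 h j t : 0 < s < 1 -> 0 < U -> 0 < V -> 0 < h ->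
  cell a0 h j t ->
  exp ((s * x + (1 - s) * y) * t)
  <= exp (2 * (Rabs x + Rabs y) * h) * exp (s * ln U + (1 - s) * ln V) *
     (s / U * exp (cell_min x a0 h j) + (1 - s) / V * exp (cell_min y a0 h j)).
Proof.
  intros Hs HU HV Hh Ht.
  pose proof (cell_linear_bounds x a0 h j t Hh Ht). pose proof (cell_linear_bounds y a0 h j t Hh Ht).
  rewrite Rmult_assoc. apply Rle_trans with
    (exp (2 * (Rabs x + Rabs y) * h) * exp (s * cell_min x a0 h j + (1 - s) * cell_min y a0 h j)).
  - rewrite <- exp_plus. apply exp_le_exp.
    pose proof (Rabs_pos x). pose proof (Rabs_pos y).
    assert (0 <= s * (Rabs x * h) <= Rabs x * h) by (split; [apply Rmult_le_pos|]; nra).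
    assert (0 <= (1 - s) * (Rabs y * h) <= Rabs y * h) by (split; [apply Rmult_le_pos|]; nra).
    nra.
  - apply Rmult_le_compat_l; [left; apply exp_pos|]. apply exp_mix_le; auto; lra.
Qed.

Lemma piece_mass_le_cells mu c A a0 h K al be (k1 k2 : nat -> R) :
  is_prob_measure mu -> 0 <= c -> borel A -> 0 < h ->
  (forall j t, A t -> cell a0 h j t -> c <= al * k1 j + be * k2 j) ->
  c * mu A <= al * simple_integral mu (cell_pieces k1 A a0 h K)
            + be * simple_integral mu (cell_pieces k2 A a0 h K)
            + c * mu (fun t => ~ (a0 <= t < a0 + INR K * h)).
Proof.
  intros Pm Hc HA Hh Hk.
  rewrite (mu_split mu Pm A (fun t => a0 <= t < a0 + INR K * h) HA (borel_Ico _ _)).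
  rewrite (mu_cells mu a0 h A K Pm Hh HA), !simple_integral_cell_pieces.
  rewrite Rmult_plus_distr_l, <- sum_upto_scal.
  apply Rplus_le_compat.
  - apply sum_upto_le. intros j _.
    assert (Hcell : borel (fun t => A t /\ cell a0 h j t)) by (apply borel_and; [auto|apply borel_Ico]).
    pose proof (scal_mu_le mu Pm _ c (al * k1 j + be * k2 j) Hcell
                  ltac:(intros t [? ?]; apply (Hk j t); auto)).
    lra.
  - apply Rmult_le_compat_l; auto. apply (mu_mono mu Pm).
    + apply borel_and; [auto|apply borel_compl, borel_Ico].
    + apply borel_compl, borel_Ico.
    + intros t [_ Ht]; auto.
Qed.

Lemma simple_integral_holder_cells mu x y s U V l a0 h K :
  is_prob_measure mu -> 0 < s < 1 -> 0 < U -> 0 < V -> 0 < h ->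
  (forall L, simple_below mu (fun t => exp (x * t)) L -> simple_integral mu L <= U) ->
  (forall L, simple_below mu (fun t => exp (y * t)) L -> simple_integral mu L <= V) ->
  simple_below mu (fun t => exp ((s * x + (1 - s) * y) * t)) l ->
  simple_integral mu l
  <= exp (2 * (Rabs x + Rabs y) * h) * exp (s * ln U + (1 - s) * ln V)
     + sum_pieces fst l * mu (fun t => ~ (a0 <= t < a0 + INR K * h)).
Proof.
  intros Pm Hs HU HV Hh BU BV Hl.
  set (r := exp (2 * (Rabs x + Rabs y) * h)).
  set (H := exp (s * ln U + (1 - s) * ln V)).
  set (T := fun t => ~ (a0 <= t < a0 + INR K * h)).
  set (kx := fun j => exp (cell_min x a0 h j)).
  set (ky := fun j => exp (cell_min y a0 h j)).
  pose proof Hl as [Hbelow Hdisj]%simple_below_iff.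
  assert (Hborel : forall a, In a l -> borel (snd a)) by (intros a Ha; apply Hbelow; auto).
  pose proof (BU _ (cell_pieces_simple_below mu x a0 h K l Hh Hborel Hdisj)) as HU'.
  pose proof (BV _ (cell_pieces_simple_below mu y a0 h K l Hh Hborel Hdisj)) as HV'.
  rewrite simple_integral_flat_map in HU', HV'. fold kx in HU'. fold ky in HV'.
  assert (Hr : 0 < r) by apply exp_pos.
  assert (HH : 0 < H) by apply exp_pos.
  set (al := r * H * (s / U)). set (be := r * H * ((1 - s) / V)).
  assert (Hal : 0 <= al) by (unfold al; apply Rmult_le_pos; [nra|left; apply Rdiv_lt_0_compat; lra]).
  assert (Hbe : 0 <= be) by (unfold be; apply Rmult_le_pos; [nra|left; apply Rdiv_lt_0_compat; lra]).
  change (simple_integral mu l) with (sum_pieces (fun a => fst a * mu (snd a)) l).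
  eapply Rle_trans.
  { apply (sum_pieces_le _ (fun a => simple_integral mu (cell_pieces kx (snd a) a0 h K))
                          (fun a => simple_integral mu (cell_pieces ky (snd a) a0 h K))
                          (fun a => fst a * mu T) al be).
    intros [c A] Ha. destruct (Hbelow _ Ha) as [Hc [HA Hle]]. simpl in *.
    apply piece_mass_le_cells; auto. intros j t HAt Ht.
    apply Rle_trans with (exp ((s * x + (1 - s) * y) * t)); [apply Hle; auto|].
    eapply Rle_trans; [apply (exp_mix_cell_bound s x y U V a0 h j t); auto|].
    fold r H. unfold al, be, kx, ky. right; ring. }
  rewrite sum_pieces_fst_scal.
  assert (al * U + be * V = r * H) by (unfold al, be; field; lra).
  fold T. nra.
Qed.

Lemma exists_cell_width len A del : 0 < len -> 0 <= A -> 0 < del ->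
  exists (K : nat) h, 0 < h /\ INR K * h = len /\ exp (A * h) <= 1 + del.
Proof.
  intros Hlen HA Hdel.
  set (Ld := ln (1 + del)).
  assert (HLd : 0 < Ld) by (unfold Ld; rewrite <- ln_1; apply ln_increasing; lra).
  destruct (nat_ge1_above (len * A / Ld)) as [K [HK1 HK2]].
  assert (HK : 0 < INR K) by (apply (lt_INR 0); lia).
  exists K, (len / INR K). repeat split.
  - apply Rdiv_lt_0_compat; lra.
  - field; lra.
  - rewrite <- (exp_ln (1 + del)) by lra. apply exp_le_exp. fold Ld.
    apply Rmult_le_compat_l with (r := Ld) in HK2; [|lra].
    replace (Ld * (len * A / Ld)) with (len * A) in HK2 by (field; lra).
    apply Rmult_le_reg_r with (INR K); auto.
    replace (A * (len / INR K) * INR K) with (len * A) by (field; lra). lra.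
Qed.

Lemma mul_div_lt_half a eps : 0 <= a -> 0 < eps -> a * (eps / (2 * (a + 1))) < eps / 2.
Proof.
  intros Ha Heps. apply Rmult_lt_reg_r with (2 * (a + 1)); [lra|].
  replace (a * (eps / (2 * (a + 1))) * (2 * (a + 1))) with (a * eps) by (field; lra).
  replace (eps / 2 * (2 * (a + 1))) with (a * eps + eps) by (field; lra). lra.
Qed.

Lemma simple_integral_holder mu x y s U V l :
  is_prob_measure mu -> 0 < s < 1 -> 0 < U -> 0 < V ->
  (forall L, simple_below mu (fun t => exp (x * t)) L -> simple_integral mu L <= U) ->
  (forall L, simple_below mu (fun t => exp (y * t)) L -> simple_integral mu L <= V) ->
  simple_below mu (fun t => exp ((s * x + (1 - s) * y) * t)) l ->
  simple_integral mu l <= exp (s * ln U + (1 - s) * ln V).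
Proof.
  intros Pm Hs HU HV BU BV Hl.
  set (H := exp (s * ln U + (1 - s) * ln V)).
  assert (HH : 0 < H) by apply exp_pos.
  set (C := sum_pieces fst l).
  assert (HC : 0 <= C).
  { apply simple_below_iff in Hl. apply (sum_pieces_fst_ge0 (fun t => exp ((s * x + (1 - s) * y) * t))), Hl. }
  apply Rle_plus_epsilon; intros eps Heps.
  (* cut off a tail of mass [< eps / 2C], then use cells fine enough that [exp] varies by a factor [<= 1 + eps / 2H] *)
  destruct (mu_tail_small mu Pm (eps / (2 * (C + 1)))) as [N HN]; [apply Rdiv_lt_0_compat; lra|].
  set (Nr := INR N + 1).
  assert (HNr : 0 < Nr) by (unfold Nr; pose proof (pos_INR N); lra).
  set (del := eps / (2 * (H + 1))).
  assert (Hdel : 0 < del) by (unfold del; apply Rdiv_lt_0_compat; lra).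
  destruct (exists_cell_width (2 * Nr) (2 * (Rabs x + Rabs y)) del) as [K [h [Hh [HKh Hr]]]];
    [lra|pose proof (Rabs_pos x); pose proof (Rabs_pos y); lra|auto|].
  pose proof (simple_integral_holder_cells mu x y s U V l (- Nr) h K Pm Hs HU HV Hh BU BV Hl) as HB.
  fold H C in HB. rewrite HKh in HB.
  assert (Htail : mu (fun t => ~ (- Nr <= t < - Nr + 2 * Nr)) <= mu (fun t => INR N <= Rabs t)).
  { apply (mu_mono mu Pm); [apply borel_compl, borel_Ico|apply borel_abs_ge|].
    intros t Ht. unfold Nr in *. pose proof (Rabs_le_inv t _ (Rle_refl _)).
    destruct (Rle_dec (- (INR N + 1)) t).
    + assert (t >= INR N + 1) by lra. lra.
    + rewrite Rabs_left by (pose proof (pos_INR N); lra). lra. }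
  assert (H1 : exp (2 * (Rabs x + Rabs y) * h) * H <= (1 + del) * H) by (apply Rmult_le_compat_r; lra).
  assert (H2 : C * mu (fun t => ~ (- Nr <= t < - Nr + 2 * Nr)) <= C * (eps / (2 * (C + 1))))
    by (apply Rmult_le_compat_l; lra).
  pose proof (mul_div_lt_half H eps ltac:(lra) Heps). pose proof (mul_div_lt_half C eps HC Heps).
  unfold del in *. lra.
Qed.

(** * Log-convexity and the slopes of elements of [X_Lambda] *)

Lemma mgf_log_convex nu x y s U V : is_prob_measure nu -> 0 < s < 1 -> 0 < U -> 0 < V ->
  mgf nu x = Fin U -> mgf nu y = Fin V ->
  Rbar_le (mgf nu (s * x + (1 - s) * y)) (Fin (exp (s * ln U + (1 - s) * ln V))).
Proof.
  intros Pnu Hs HU HV Hx Hy. apply integral_le. intros l Hl.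
  apply (simple_integral_holder nu x y s U V l); auto; intros L HL.
  - pose proof (simple_integral_le_integral nu _ L HL) as H. unfold mgf in Hx. rewrite Hx in H. auto.
  - pose proof (simple_integral_le_integral nu _ L HL) as H. unfold mgf in Hy. rewrite Hy in H. auto.
Qed.

Lemma ln_le a b : 0 < a -> a <= b -> ln a <= ln b.
Proof. intros Ha [Hab|Hab]; [left; apply ln_increasing; auto|subst; lra]. Qed.

Section XLambda.

Variables (g f : R -> Rbar).
Hypothesis HX : X_M g.
Hypothesis Hf : forall t, f t = Rbar_log (g t).

Lemma X_M_log_convex x y s U V : 0 < s < 1 -> g x = Fin U -> g y = Fin V ->
  exists W, g (s * x + (1 - s) * y) = Fin W /\ 0 < W /\ ln W <= s * ln U + (1 - s) * ln V.
Proof.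
  intros Hs Hx Hy. destruct HX as [Hval [_ [_ [Hconv [nu [Pnu Hm]]]]]].
  assert (Hpos : forall t r, g t = Fin r -> 0 < r).
  { intros t r Ht. destruct (Hval t) as [[r' [Hr' Hr'0]]|Hr']; rewrite Ht in Hr'; congruence. }
  pose proof (Hconv x y s U V ltac:(lra) Hx Hy) as Hc.
  destruct (Hval (s * x + (1 - s) * y)) as [[W [HW HW0]]|HW]; [|rewrite HW in Hc; simpl in Hc; tauto].
  exists W; repeat split; auto.
  pose proof (Hpos x U Hx). pose proof (Hpos y V Hy).
  rewrite (Hm x) in Hx by congruence. rewrite (Hm y) in Hy by congruence.
  pose proof (mgf_log_convex nu x y s U V Pnu Hs ltac:(auto) ltac:(auto) Hx Hy) as Hle.
  rewrite <- Hm, HW in Hle by congruence. simpl in Hle.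
  rewrite <- (ln_exp (s * ln U + (1 - s) * ln V)). apply ln_le; auto.
Qed.

Lemma X_M_at0 : g 0 = Fin 1.
Proof. destruct HX as [_ [H0 [_ [_ [nu [Pnu Hm]]]]]]. rewrite Hm by auto. apply mgf_0; auto. Qed.

Lemma X_Lambda_values t :
  (exists a, f t = Fin a /\ g t = Fin (exp a)) \/ (f t = PInf /\ g t = PInf).
Proof.
  destruct HX as [Hval _]. rewrite Hf.
  destruct (Hval t) as [[r [-> Hr]]| ->]; simpl; [left|right; auto].
  exists (ln r); rewrite exp_ln; auto.
Qed.

Lemma X_Lambda_slope_le_neg t u a : t < u -> u < 0 -> f t = Fin a ->
  exists b, f u = Fin b /\ a / t <= b / u.
Proof.
  intros Htu Hu Ha.
  (* [u] is the convex combination of [t] and [0] with weight [u / t] *)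
  set (s := u / t).
  assert (Hs : 0 < s < 1).
  { unfold s. replace (u / t) with ((- u) / (- t)) by (field; lra). split.
    - apply Rdiv_lt_0_compat; lra.
    - apply Rmult_lt_reg_r with (- t); [lra|]. replace (- u / - t * - t) with (- u) by (field; lra). lra. }
  destruct (X_Lambda_values t) as [[a' [Ha' Hgt]]|[Hft _]]; [|congruence].
  rewrite Ha in Ha'. inversion Ha'; subst a'.
  destruct (X_M_log_convex t 0 s (exp a) 1 Hs Hgt X_M_at0) as [W [HW [HW0 Hln]]].
  replace (s * t + (1 - s) * 0) with u in HW by (unfold s; field; lra).
  rewrite ln_exp, ln_1 in Hln. exists (ln W); split; [rewrite Hf, HW; auto|].
  assert (Hc : ln W <= u * (a / t)) by (replace (u * (a / t)) with (s * a) by (unfold s; field; lra); lra).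
  apply Rmult_le_compat_neg_l with (r := / u) in Hc; [|left; apply Rinv_lt_0_compat; auto].
  replace (/ u * (u * (a / t))) with (a / t) in Hc by (field; lra).
  unfold Rdiv at 2. rewrite Rmult_comm. auto.
Qed.

Lemma X_Lambda_slope_le_cross t u a b : t < 0 -> 0 < u -> f t = Fin a -> f u = Fin b -> a / t <= b / u.
Proof.
  intros Ht Hu Ha Hb.
  (* [0] is the convex combination of [t] and [u] with weight [u / (u - t)] *)
  set (s := u / (u - t)).
  assert (Hs : 0 < s < 1).
  { unfold s; split; [apply Rdiv_lt_0_compat; lra|].
    apply Rmult_lt_reg_r with (u - t); [lra|]. field_simplify; lra. }
  destruct (X_Lambda_values t) as [[a' [Ha' Hgt]]|[Hft _]]; [|congruence].
  destruct (X_Lambda_values u) as [[b' [Hb' Hgu]]|[Hfu _]]; [|congruence].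
  rewrite Ha in Ha'. rewrite Hb in Hb'. inversion Ha'; inversion Hb'; subst a' b'.
  destruct (X_M_log_convex t u s (exp a) (exp b) Hs Hgt Hgu) as [W [HW [HW0 Hln]]].
  replace (s * t + (1 - s) * u) with 0 in HW by (unfold s; field; lra).
  rewrite X_M_at0 in HW. inversion HW; subst W.
  rewrite !ln_exp, ln_1 in Hln.
  assert (Hk : 0 <= u * a - t * b).
  { assert (0 <= (s * a + (1 - s) * b) * (u - t)) by (apply Rmult_le_pos; lra).
    replace ((s * a + (1 - s) * b) * (u - t)) with (u * a - t * b) in H by (unfold s; field; lra). auto. }
  apply Rmult_le_reg_r with (- t * u); [nra|].
  replace (a / t * (- t * u)) with (- (u * a)) by (field; lra).
  replace (b / u * (- t * u)) with (- (t * b)) by (field; lra). lra.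
Qed.

End XLambda.

Lemma X_Lambda_cumulant_like f : X_Lambda f -> cumulant_like f.
Proof.
  intros [g [HX Hf]].
  split; [|split].
  - intros t. destruct (X_Lambda_values g f HX Hf t) as [[a [-> _]]|[-> _]]; discriminate.
  - rewrite Hf, (X_M_at0 g HX). simpl. rewrite ln_1; auto.
  - intros t u Ht Htu Hu. rewrite !Jmap_neq0 by lra.
    destruct (X_Lambda_values g f HX Hf t) as [[a [Hft _]]|[Hft _]].
    2:{ rewrite Hft. simpl. destruct (Rlt_dec 0 t); [lra|exact I]. }
    rewrite Hft. destruct (Rlt_dec u 0).
    + destruct (X_Lambda_slope_le_neg g f HX Hf t u a) as [b [Hfu Hab]]; auto.
      rewrite Hfu. auto.
    + destruct (X_Lambda_values g f HX Hf u) as [[b [Hfu _]]|[Hfu _]]; rewrite Hfu; simpl.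
      * apply (X_Lambda_slope_le_cross g f HX Hf t u); auto; lra.
      * destruct (Rlt_dec 0 u); [exact I|lra].
Qed.

Theorem mainTheorem11 :
  forall f : R -> Rbar, X_Lambda f ->
  forall k : nat, (1 <= k)%nat ->
  exists m : nat, (1 <= m)%nat /\
    forall g : R -> Rbar, X_Lambda g ->
      inV m (epi f) (epi g) ->
      inV k (closure2 (epi (Jmap f))) (closure2 (epi (Jmap g))).
Proof.
  intros f Hf k Hk.
  destruct (Jmap_AW_continuous f (X_Lambda_cumulant_like f Hf) k Hk) as [m [Hm Hcont]].
  exists m; split; auto.
  intros g Hg. apply Hcont, X_Lambda_cumulant_like, Hg.
Qed.
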